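(* Let $n\in\mathbb{N}$, $\varkappa\in\mathbb{N}^n$, $N=|\varkappa|$, and $\lambda$ a partition of length $\le N$. Then \[ G_\lambda(y,\varkappa)=J_\lambda\bigl(y^{[\varkappa]}\bigr)\,M(y,\varkappa). \]
   Context: $\hom_m$, $\operatorname{e}_m$: complete homogeneous and elementary symmetric polynomials, zero for negative degree (and $\operatorname{e}_m=0$ when $m$ exceeds the number of variables). Partitions are extended by zeros to length $N$. For a list of nonnegative integers $\mu$, $y^{[\mu]}$ is the list in which $y_1$ is repeated $\mu_1$ times, then $y_2$ repeated $\mu_2$ times, etc.; $b_q$ is the $q$th standard unit vector in $\mathbb{Z}^n$. Each $p\in\{1,\ldots,N\}$ is written uniquely as $p=\varkappa_1+\cdots+\varkappa_{q-1}+r$ with $1\le q\le n$, $1\le r\le\varkappa_q$. Definitions (all $N\times N$, indices in $\{1,\ldots,N\}$, $(q,r)$ associated to $p$): $J_\lambda(x)=[\hom_{\lambda_j-j+k}(x)]_{j,k=1}^N$ (Jacobi–Trudi matrix); $M(y,\varkappa)_{k,p}=(-1)^{N-k-r+1}\operatorname{e}_{N-k-r+1}\bigl(y^{[\varkappa-rb_q]}\bigr)$; $G_\lambda(y,\varkappa)_{j,p}=\binom{N+\lambda_j-j}{r-1}y_q^{N+\lambda_j-j-r+1}$ if $N+\lambda_j-j-r+1\ge0$, and $0$ otherwise. *)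

From HB Require Import structures.
From mathcomp Require Import all_boot all_order all_algebra.
Set Implicit Arguments. Unset Strict Implicit. Unset Printing Implicit Defensive.
Import Order.TTheory GRing.Theory Num.Theory.
Local Open Scope ring_scope.

(* complete homogeneous symmetric polynomial h_m evaluated at the list s;
   zero for negative degree *)
Definition hom {R : comNzRingType} (s : seq R) (m : int) : R :=
  match m with
  | Posz m => \sum_(t : {ffun 'I_(size s) -> 'I_m.+1} | (\sum_i val (t i) == m)%N)
                 \prod_(i < size s) s`_i ^+ t i
  | Negz _ => 0
  end.

(* elementary symmetric polynomial e_m evaluated at the list s;
   zero for negative degree, and (automatically) for m > size s *)
Definition esym {R : comNzRingType} (s : seq R) (m : int) : R :=
  match m with
  | Posz m => \sum_(A : {set 'I_(size s)} | #|A| == m) \prod_(i in A) s`_i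
  | Negz _ => 0
  end.

(* y^[mu] : y_1 repeated mu_1 times, then y_2 repeated mu_2 times, ... *)
Definition yrep {R : Type} (y : seq R) (mu : seq nat) : seq R :=
  flatten [seq nseq m.2 m.1 | m <- zip y mu].

(* partial sum kappa_1 + ... + kappa_q (0-based: first q entries) *)
Definition psum (kappa : seq nat) (q : nat) : nat := \sum_(i < q) nth 0%N kappa i.

(* For a 0-based position p0 (p = p0+1), the 0-based index q0 (q = q0+1)
   with kappa_1+..+kappa_{q-1} < p <= kappa_1+..+kappa_q *)
Definition qidx (kappa : seq nat) (p0 : nat) : nat :=
  find (fun q => (p0 < psum kappa q.+1)%N) (iota 0 (size kappa)).

(* r with p = kappa_1+..+kappa_{q-1} + r, 1 <= r <= kappa_q *)
Definition ridx (kappa : seq nat) (p0 : nat) : nat :=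
  (p0.+1 - psum kappa (qidx kappa p0))%N.

Definition kappa_minus (kappa : seq nat) (q0 r : nat) : seq nat :=
  set_nth 0%N kappa q0 (nth 0%N kappa q0 - r)%N.

Definition is_partition (lam : seq nat) : Prop :=
  sorted geq lam /\ 0%N \notin lam.

Definition JT {R : comNzRingType} (N : nat) (lam : seq nat) (x : seq R) : 'M[R]_N :=
  \matrix_(j < N, k < N) hom x ((nth 0%N lam j)%:Z - (j : nat)%:Z + (k : nat)%:Z).

Definition Mmat {R : comNzRingType} (y : seq R) (kappa : seq nat) : 'M[R]_(sumn kappa) :=
  \matrix_(k < sumn kappa, p < sumn kappa)
    let r := ridx kappa p in
    let q0 := qidx kappa p in
    let d : int := (sumn kappa)%:Z - (k : nat).+1%:Z - r%:Z + 1 in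
    (-1) ^+ `|d|%N * esym (yrep y (kappa_minus kappa q0 r)) d.

(* G_lambda(y,kappa)_{j,p} = binom(N+lambda_j-j, r-1) y_q^{N+lambda_j-j-r+1}
   if the exponent is >= 0, else 0 (N + lambda_j - j >= 0 always since j <= N) *)
Definition Gmat {R : comNzRingType} (lam : seq nat) (y : seq R) (kappa : seq nat)
  : 'M[R]_(sumn kappa) :=
  \matrix_(j < sumn kappa, p < sumn kappa)
    let r := ridx kappa p in
    let q0 := qidx kappa p in
    let a := (sumn kappa + nth 0%N lam j - (j : nat).+1)%N in
    if (r.-1 <= a)%N then ('C(a, r.-1))%:R * (nth 0 y q0) ^+ (a - r.-1)
    else 0.

(* Writing x = y^[kappa] and z = y^[kappa - r b_q], entry (j, p) of J M is, after
   reindexing, sum_i h_(m - i)(x) (-1)^i e_i(z) with m = N + lambda_j - j - r + 1, i.e. the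
   coefficient of t^m in prod_(a in x) 1/(1 - a t) * prod_(b in z) (1 - b t).  Since x is
   z with y_q added r times, this series is (1 - y_q t)^-r, whose coefficient of t^m is
   binom(m + r - 1, r - 1) y_q^m.  Power series are represented by polynomials compared
   below a degree bound. *)
From Pilot Require Import Defs.
From HB Require Import structures.
From mathcomp Require Import all_boot all_order all_algebra.
From mathcomp Require Import zify.
Set Implicit Arguments. Unset Strict Implicit. Unset Printing Implicit Defensive.
Import Order.TTheory GRing.Theory Num.Theory.
(* Otherwise [hom] would refer to [vector.hom]. *)
Import Defs.
Local Open Scope ring_scope.

Section TruncatedPowerSeries.
Variable R : comNzRingType.
Implicit Types (p q : {poly R}) (a c : R).

Definition eq_upto (K : nat) p q := forall j, (j < K)%N -> p`_j = q`_j.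

Lemma eq_upto_mul K p p' q q' :
  eq_upto K p p' -> eq_upto K q q' -> eq_upto K (p * q) (p' * q').
Proof.
move=> pp' qq' j ltjK; rewrite !coefM; apply: eq_bigr => i _.
rewrite pp' ?qq' //; first exact: leq_ltn_trans (leq_subr _ _) ltjK.
by apply: leq_ltn_trans ltjK; rewrite -ltnS.
Qed.

Lemma eq_upto_prod K (I : Type) (s : seq I) (F F' : I -> {poly R}) :
  (forall i, eq_upto K (F i) (F' i)) ->
  eq_upto K (\prod_(i <- s) F i) (\prod_(i <- s) F' i).
Proof. by move=> FF'; apply: big_ind2 => // *; apply: eq_upto_mul. Qed.

Definition geom_poly (K : nat) a : {poly R} := \poly_(i < K) a ^+ i.

Lemma coef_geom_poly K a j : (geom_poly K a)`_j = if (j < K)%N then a ^+ j else 0.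
Proof. by rewrite coef_poly. Qed.

Lemma eq_upto_geom_poly K K' a : (K <= K')%N -> eq_upto K (geom_poly K' a) (geom_poly K a).
Proof. by move=> leKK' j ltjK; rewrite !coef_geom_poly ltjK (leq_trans ltjK). Qed.

Lemma geom_polyK K a : eq_upto K (geom_poly K a * (1 - a%:P * 'X)) 1.
Proof.
move=> [|j] ltjK; rewrite mulrBr mulr1 coefB coef_geom_poly ltjK mulrA coefMX coefC //=.
  by rewrite subr0.
by rewrite mulrC coefCM coef_geom_poly ltnW // -exprS subrr.
Qed.

Lemma hockey_stick (M s : nat) :
  (\sum_(i < M.+1) 'C(i + s, s))%N = 'C(M + s.+1, s.+1).
Proof.
elim: M => [|M IH]; first by rewrite big_ord1 !binn.
by rewrite big_ord_recr /= IH addSnnS [in RHS]addSn binS addnC.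
Qed.

Lemma coef_geom_polyX K c r M : (M < K)%N ->
  ((geom_poly K c) ^+ r.+1)`_M = 'C(M + r, r)%:R * c ^+ M.
Proof.
elim: r M => [|r IH] M ltMK; first by rewrite coef_geom_poly ltMK addn0 bin0 mul1r.
rewrite exprSr coefM.
under eq_bigr => i _.
  have leiM : (i <= M)%N by rewrite -ltnS.
  rewrite IH ?(leq_ltn_trans leiM) // coef_geom_poly (leq_ltn_trans (leq_subr _ _)) //.
  rewrite -mulrA -exprD subnKC //.
over.
by rewrite -mulr_suml -natr_sum hockey_stick.
Qed.

End TruncatedPowerSeries.

Lemma sum_ord_vanish (V : nmodType) (F : nat -> V) (n m : nat) :
  (n <= m)%N -> (forall i, (n <= i)%N -> F i = 0) ->
  \sum_(i < m) F i = \sum_(i < n) F i.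
Proof.
move=> le_nm F0; rewrite (big_ord_widen _ _ le_nm) [RHS]big_mkcond /=.
by apply: eq_bigr => i _; case: ltnP => // /F0->.
Qed.

Section GeneratingFunctions.
Variable R : comNzRingType.
Implicit Types (s x z : seq R) (c : R).

Lemma hom_coef s (m K : nat) : (m < K)%N ->
  hom s m = (\prod_(a <- s) geom_poly K a)`_m.
Proof.
move=> ltmK; have -> : hom s m = (\prod_(a <- s) geom_poly m.+1 a)`_m.
  rewrite /hom [in RHS](big_nth 0) big_mkord.
  under [in RHS]eq_bigr do rewrite /geom_poly poly_def.
  rewrite bigA_distr_bigA coef_sum [LHS]big_mkcond /=; apply: eq_bigr => t _.
  under [in RHS]eq_bigr do rewrite -mul_polyC.
  rewrite big_split /= -rmorph_prod prodrXr coefCM coefXn eq_sym.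
  by case: eqP; rewrite ?mulr1 ?mulr0.
by symmetry; apply: (eq_upto_prod (K := m.+1)) => // a; apply: eq_upto_geom_poly.
Qed.

Lemma esym_coef z (i : nat) :
  (-1) ^+ i * esym z i = (\prod_(b <- z) (1 - b%:P * 'X))`_i.
Proof.
rewrite /esym [in RHS](big_nth 0) big_mkord.
under [in RHS]eq_bigr do rewrite -mulNr -polyCN addrC.
rewrite bigA_distr coef_sum mulr_sumr [LHS]big_mkcond /=; apply: eq_bigr => A _.
rewrite -big_mkcond /= big_split /= -rmorph_prod prodr_const coefCM coefXn prodrN eq_sym.
by case: eqP => [->|_]; rewrite ?mulr1 ?mulr0.
Qed.

Lemma hom_lt0 s (m : int) : (m < 0)%R -> hom s m = 0.
Proof. by case: m. Qed.

Lemma esym_lt0 z (m : int) : (m < 0)%R -> esym z m = 0.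
Proof. by case: m. Qed.

Lemma esym_gt_size z (i : nat) : (size z < i)%N -> esym z i = 0.
Proof.
move=> ltzi; rewrite /esym big_pred0 // => A; apply/negbTE.
by rewrite neq_ltn (leq_ltn_trans _ ltzi) // -[X in (_ <= X)%N]card_ord max_card.
Qed.

(* Coefficient [t^M] of [prod_x 1/(1 - a t) * prod_z (1 - b t)]: everything
   cancels except [(1 - c t)^-(r+1)]. *)
Lemma hom_esym_conv x z c (r M : nat) : perm_eq x (z ++ nseq r.+1 c) ->
  \sum_(i < M.+1) hom x (M%:Z - i%:Z) * ((-1) ^+ i * esym z i)
  = 'C(M + r, r)%:R * c ^+ M.
Proof.
move=> xz; set K := M.+1.
transitivity (((\prod_(b <- z) (1 - b%:P * 'X)) * \prod_(a <- x) geom_poly K a)`_M).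
  rewrite coefM; apply: eq_bigr => i _.
  have leiM : (i <= M)%N by rewrite -ltnS.
  by rewrite subzn // (hom_coef _ (K := K)) ?ltnS ?leq_subr // esym_coef mulrC.
rewrite (perm_big _ xz) big_cat big_nseq iter_mulr_1 mulrA -(coef_geom_polyX _ _ (ltnSn M)).
have EP1 : eq_upto K (\prod_(b <- z) ((1 - b%:P * 'X) * geom_poly K b))
                     (\prod_(b <- z) 1).
  by apply: eq_upto_prod => b; rewrite mulrC; apply: geom_polyK.
rewrite big_split big1_eq /= in EP1.
have := eq_upto_mul EP1 (fun j _ => erefl ((geom_poly K c ^+ r.+1)`_j)).
by rewrite mul1r; apply.
Qed.

Lemma hom_esym_conv_wide x z c (r M L : nat) :
  perm_eq x (z ++ nseq r.+1 c) -> (size z <= L)%N ->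
  \sum_(i < L.+1) hom x (M%:Z - i%:Z) * ((-1) ^+ i * esym z i)
  = 'C(M + r, r)%:R * c ^+ M.
Proof.
move=> xz lezL; rewrite -(hom_esym_conv M xz).
pose F i := hom x (M%:Z - i%:Z) * ((-1) ^+ i * esym z i).
have F0 i : (minn L M < i)%N -> F i = 0.
  rewrite gtn_min => /orP[ltLi|ltMi]; rewrite /F.
    by rewrite esym_gt_size ?mulr0 // (leq_ltn_trans lezL).
  by rewrite hom_lt0 ?mul0r //; lia.
rewrite (sum_ord_vanish (F := F) (n := (minn L M).+1)) ?ltnS ?geq_minl //.
by rewrite [RHS](sum_ord_vanish (F := F) (n := (minn L M).+1)) ?ltnS ?geq_minr.
Qed.

End GeneratingFunctions.

Lemma size_yrep (T : Type) (y : seq T) (mu : seq nat) :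
  size y = size mu -> size (yrep y mu) = sumn mu.
Proof.
elim: y mu => [|a y IH] [|m mu] //= [sz].
by rewrite /yrep /= size_cat size_nseq -IH.
Qed.

Lemma perm_yrep_kappa_minus (T : eqType) (y : seq T) (kappa : seq nat) (a0 : T) q r :
  size y = size kappa -> (q < size y)%N -> (r <= nth 0%N kappa q)%N ->
  perm_eq (yrep y kappa) (yrep y (kappa_minus kappa q r) ++ nseq r (nth a0 y q)).
Proof.
elim: y kappa q => [|a y IH] [|m kappa] [|q] //= [sz]; rewrite /yrep /kappa_minus /=.
  move=> _ le_rm; rewrite -[in X in perm_eq X](subnK le_rm) nseqD -!catA perm_cat2l.
  by rewrite perm_catC.
by move=> lt_qy le_rk; rewrite -catA perm_cat2l; apply: IH.
Qed.

Lemma psumS kappa q : psum kappa q.+1 = (psum kappa q + nth 0%N kappa q)%N.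
Proof. by rewrite /psum big_ord_recr. Qed.

Lemma qidx_ridx_bounds kappa p : (p < sumn kappa)%N ->
  [/\ (qidx kappa p < size kappa)%N, (0 < ridx kappa p)%N
    & (ridx kappa p <= nth 0%N kappa (qidx kappa p))%N].
Proof.
move=> ltpN; have kappa_gt0 : (0 < size kappa)%N by case: kappa ltpN.
set P := fun q => (p < psum kappa q.+1)%N.
have has_P : has P (iota 0 (size kappa)).
  apply/hasP; exists (size kappa).-1; first by rewrite mem_iota; lia.
  rewrite /P prednK //.
  by move: ltpN; rewrite sumnE (big_nth 0%N) big_mkord.
have ltqk : (qidx kappa p < size kappa)%N.
  by rewrite /qidx -/P -[X in (_ < X)%N](size_iota 0 (size kappa)) -has_find.
have Pq : P (qidx kappa p) by have := nth_find 0%N has_P; rewrite nth_iota.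
have le_psum_p : (psum kappa (qidx kappa p) <= p)%N.
  case E: (qidx kappa p) => [|q]; first by rewrite /psum big_ord0.
  have := @before_find _ 0%N P (iota 0 (size kappa)) q.
  rewrite -/(qidx kappa p) E nth_iota; last by rewrite -E ltnW.
  by move=> /(_ (ltnSn q)); rewrite /P add0n => /negbT; rewrite -leqNgt.
by move: Pq; rewrite /P psumS /ridx; split => //; lia.
Qed.

Lemma sum_hom_esym_reindex (R : comNzRingType) (x z : seq R) (N r : nat) (b : int) :
  (0 < r <= N)%N ->
  \sum_(k < N) hom x (b + k%:Z) *
    ((-1) ^+ absz (N%:Z - k.+1%:Z - r%:Z + 1) * esym z (N%:Z - k.+1%:Z - r%:Z + 1))
  = \sum_(i < (N - r).+1) hom x (b + (N - r)%:Z - i%:Z) * ((-1) ^+ i * esym z i).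
Proof.
move=> /andP[r_gt0 le_rN].
pose G (k : nat) := hom x (b + k%:Z) *
  ((-1) ^+ absz (N%:Z - k.+1%:Z - r%:Z + 1) * esym z (N%:Z - k.+1%:Z - r%:Z + 1)).
rewrite (eq_bigr (fun k : 'I_N => G k)) // (sum_ord_vanish (F := G) (n := (N - r).+1));
  first last.
- by move=> k lt_k; rewrite /G esym_lt0 ?mulr0 //; lia.
- lia.
rewrite (reindex_inj rev_ord_inj); apply: eq_bigr => i _ /=; rewrite /G subSS.
have le_i : (i <= N - r)%N by rewrite -ltnS.
have -> : b + (N - r - i)%N%:Z = b + (N - r)%:Z - i%:Z by lia.
by have -> : N%:Z - (N - r - i).+1%:Z - r%:Z + 1 = i%:Z by lia.
Qed.

Theorem proposition5p2 (R : comNzRingType) (n : nat) (y : n.-tuple R)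
  (kappa : n.-tuple nat) (lam : seq nat) :
  is_partition lam -> (size lam <= sumn kappa)%N ->
  Gmat lam y kappa = JT (sumn kappa) lam (yrep y kappa) *m Mmat y kappa.
Proof.
move=> _ _; apply/matrixP => j p; rewrite !mxE /=.
under eq_bigr do rewrite !mxE /=.
have [lt_qn r_gt0 le_r_kq] := qidx_ridx_bounds (ltn_ord p).
set q := qidx kappa p in lt_qn le_r_kq *; set r := ridx kappa p in r_gt0 le_r_kq *.
have xz : perm_eq (yrep y kappa) (yrep y (kappa_minus kappa q r) ++ nseq r (nth 0 y q)).
  by apply: perm_yrep_kappa_minus; rewrite // !size_tuple // -(size_tuple kappa).
have := perm_size xz; rewrite size_cat size_nseq size_yrep ?size_tuple // => size_z.
rewrite sum_hom_esym_reindex; last by rewrite r_gt0 size_z leq_addl.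
case: r r_gt0 le_r_kq xz size_z => // s _ _ xz size_z /=.
set a := (sumn kappa + nth 0%N lam j - j.+1)%N.
have ltjN := ltn_ord j.
case: leqP => [le_sa|lt_as].
  have -> : (nth 0%N lam j)%:Z - j%:Z + (sumn kappa - s.+1)%:Z = (a - s)%N by lia.
  by rewrite (hom_esym_conv_wide _ xz) ?subnK // size_z addnK.
by rewrite big1 // => i _; rewrite hom_lt0 ?mul0r //; lia.
Qed.
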